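(* There is an absolute constant $c>0$ such that for infinitely many $d$ there exists a high-multiplicity Bin Packing instance with $d$ item types (sizes $s_1,\dots,s_d$, multiplicities $a_1,\dots,a_d\in\mathbb{Z}_{\ge 0}$, bin capacity $C$) for which every optimal solution $x$ of its configuration ILP satisfies $|\operatorname{supp}(x)|\ge 2^{cd}$, i.e. $|\operatorname{supp}(x)|\in 2^{\Omega(d)}$. More concretely, for every integer $d'\ge 1$ there is such an instance with $d=12d'+4$ item types in which every optimal solution uses at least $2^{d'}-1$ pairwise distinct configurations.
   Context: High-multiplicity Bin Packing: given $d$ item types with sizes $s_i$, amounts $a_i\in\mathbb{Z}_{\ge0}$ and a bin capacity $C$, pack all items into as few bins as possible so that every bin has total size at most $C$. A configuration is a vector $p\in\mathbb{Z}^d_{\ge 0}$ with $s^Tp\le C$ (a feasible filling of one bin); let $\mathcal{C}$ be the set of all configurations. The configuration ILP is $\min\{\mathbf{1}^Tx : \sum_{p\in\mathcal{C}} x_p\, p = a,\ x\in\mathbb{Z}^{\mathcal{C}}_{\ge0}\}$, where $x_p$ is the number of bins filled with configuration $p$. The support of a vector $x$ is $\operatorname{supp}(x)=\{p: x_p\neq 0\}$. *)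

From mathcomp Require Import all_boot.
Set Implicit Arguments. Unset Strict Implicit. Unset Printing Implicit Defensive.

(* Every configuration p (a vector in
   Z_{>=0}^d with s^T p <= C) satisfies p i <= C when all sizes are >= 1,
   so configurations are encoded as finite functions 'I_d -> 'I_C.+1;
   the index type [cand d C] thus contains every configuration. *)
Definition cand (d C : nat) := {ffun 'I_d -> 'I_C.+1}.

Definition is_config d (s : 'I_d -> nat) (C : nat) (p : cand d C) : bool :=
  \sum_(i < d) s i * p i <= C.

Arguments is_config {d} s C p.

Definition config_ilp_feasible d (s a : 'I_d -> nat) (C : nat)
    (x : {ffun cand d C -> nat}) : Prop :=
  (forall p, x p != 0 -> is_config s C p) /\
  (forall i : 'I_d, \sum_(p : cand d C) x p * p i = a i).

Arguments config_ilp_feasible {d} s a C x.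

Definition nbins d C (x : {ffun cand d C -> nat}) : nat :=
  \sum_(p : cand d C) x p.

Definition config_ilp_optimal d (s a : 'I_d -> nat) (C : nat)
    (x : {ffun cand d C -> nat}) : Prop :=
  config_ilp_feasible s a C x /\
  (forall y, config_ilp_feasible s a C y -> nbins x <= nbins y).

Definition supp d C (x : {ffun cand d C -> nat}) : {set cand d C} :=
  [set p | x p != 0].
Arguments config_ilp_optimal {d} s a C x.

From mathcomp Require Import all_boot zify ring.
Set Implicit Arguments. Unset Strict Implicit. Unset Printing Implicit Defensive.

(* The item types come in K + 1 layers, and the sizes encode, one digit per
   equation in a large base, a linear system: a bin is full exactly when its
   configuration solves the system.  A solution selects bits b_0, ..., b_(K-1),
   and the number of its items of the two "register" types of the last layer
   is then forced to be B ^ t with t = sum_j b_j 2 ^ j and B = 2 ^ K + 1.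
   Conversely every t < 2 ^ K is realised by a solution, and the demand is one
   bin of each of these 2 ^ K configurations.  Since the items fill exactly
   2 ^ K bins, an optimal solution only uses full bins; summing the register
   over its bins gives sum_(t < 2 ^ K) B ^ t, and as there are fewer than B
   bins, comparing base-B digits shows that every label t occurs, so at least
   2 ^ K distinct configurations are used.  K = 2 d' gives d = 12 d' + 4. *)

Lemma sum_digits_lt B n (f : nat -> nat) :
  (forall m, m < n -> f m < B) -> \sum_(m < n) f m * B ^ m < B ^ n.
Proof.
elim: n => [|n IH] f_lt; first by rewrite big_ord0 expn0.
rewrite big_ord_recr /= expnS.
have lt_sum := IH (fun m lt_mn => f_lt m (ltnW lt_mn)).
apply: (@leq_trans (B ^ n + f n * B ^ n)); first by rewrite ltn_add2r.
by rewrite -mulSn leq_mul2r f_lt ?orbT.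
Qed.

Lemma eq_digits B n (f g : nat -> nat) :
  (forall m, m < n -> f m < B) -> (forall m, m < n -> g m < B) ->
  \sum_(m < n) f m * B ^ m = \sum_(m < n) g m * B ^ m ->
  forall m, m < n -> f m = g m.
Proof.
elim: n => [|n IH] f_lt g_lt E m //.
have f_lt' m' (lt_m'n : m' < n) := f_lt m' (ltnW lt_m'n).
have g_lt' m' (lt_m'n : m' < n) := g_lt m' (ltnW lt_m'n).
rewrite !big_ord_recr /= in E.
have Bn_gt0 : 0 < B ^ n by rewrite expn_gt0 (leq_ltn_trans _ (f_lt n _)).
have top : f n = g n.
  move/(congr1 (fun z => z %/ B ^ n)): E.
  by rewrite /= !(addnC (\sum_(i < n) _)) !divnMDl // !divn_small ?addn0 ?sum_digits_lt.
rewrite top in E; move/addIn: E => E.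
rewrite ltnS leq_eqVlt => /predU1P[-> //|lt_mn].
exact: IH f_lt' g_lt' E m lt_mn.
Qed.

Lemma leq_sum_eq (I : finType) (f g : I -> nat) :
  (forall i, f i <= g i) -> \sum_i g i <= \sum_i f i -> forall i, f i = g i.
Proof.
move=> le_fg le_sum i.
have split_g : \sum_i (g i - f i) + \sum_i f i = \sum_i g i.
  by rewrite -big_split /=; apply: eq_bigr => j _; rewrite subnK.
have : \sum_i (g i - f i) == 0.
  by rewrite -(eqn_add2r (\sum_i f i)) split_g add0n eqn_leq le_sum leq_sum.
rewrite sum_nat_eq0 => /forallP /(_ i); rewrite subn_eq0 => le_gf.
by apply/eqP; rewrite eqn_leq le_fg.
Qed.

Section ConfigILP.
Variables (d : nat) (s a : 'I_d -> nat) (C : nat).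

Definition load (p : cand d C) := \sum_(i < d) s i * p i.

Lemma feasible_le_demand x p i :
  config_ilp_feasible s a C x -> x p != 0 -> p i <= a i.
Proof.
move=> [_ demand] xp_neq0; rewrite -demand (bigD1 p) //=.
by apply: leq_trans (leq_addr _ _); rewrite leq_pmull // lt0n.
Qed.

Lemma feasible_total_load x :
  config_ilp_feasible s a C x -> \sum_p x p * load p = \sum_(i < d) s i * a i.
Proof.
move=> [_ demand].
under eq_bigr => p _ do rewrite /load big_distrr.
rewrite exchange_big /=; apply: eq_bigr => i _.
by rewrite -demand big_distrr; apply: eq_bigr => p _ /=; ring.
Qed.

Lemma optimal_full_bins x y :
  config_ilp_optimal s a C x -> config_ilp_feasible s a C y ->
  (forall p, y p != 0 -> load p = C) -> forall p, x p != 0 -> load p = C.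
Proof.
move=> [x_feas x_opt] y_feas y_full p xp_neq0.
have y_load : \sum_p y p * load p = nbins y * C.
  rewrite /nbins big_distrl; apply: eq_bigr => q _.
  by case: (eqVneq (y q) 0) => [-> //|/y_full ->].
have x_full := @leq_sum_eq _ (fun q => x q * load q) (fun q => x q * C).
have xp_gt0 : 0 < x p by rewrite lt0n.
apply/eqP; rewrite -(eqn_pmul2l xp_gt0) x_full //.
- move=> q; case: (eqVneq (x q) 0) => [-> //|/x_feas.1 config_q].
  by rewrite leq_mul2l; apply/orP; right.
- rewrite -big_distrl (feasible_total_load x_feas) -(feasible_total_load y_feas) y_load.
  by rewrite leq_mul2r x_opt ?orbT.
Qed.

End ConfigILP.

Lemma card_supp_labels (T : finType) (x : T -> nat) (lab : T -> nat) B N :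
  \sum_p x p <= N -> N < B -> (forall p, x p != 0 -> lab p < N) ->
  \sum_p x p * B ^ lab p = \sum_(t < N) B ^ t ->
  N <= #|[set p | x p != 0]|.
Proof.
move=> x_le lt_NB lab_lt x_lab.
pose hits t := \sum_p (lab p == t) * x p.
have hits_lt t : hits t < B.
  apply: leq_ltn_trans lt_NB; apply: leq_trans x_le; apply: leq_sum => p _.
  by case: (_ == _); rewrite ?mul1n ?mul0n.
have hits_digits : \sum_(t < N) hits t * B ^ t = \sum_(t < N) 1 * B ^ t.
  under [RHS]eq_bigr do rewrite mul1n.
  rewrite -x_lab; under [LHS]eq_bigr => t _ do rewrite /hits big_distrl /=.
  rewrite exchange_big /=; apply: eq_bigr => p _.
  case: (eqVneq (x p) 0) => [->|/lab_lt lt_labN].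
    by rewrite mul0n big1 // => t _; rewrite muln0.
  rewrite (bigD1 (Ordinal lt_labN)) //= eqxx mul1n big1 ?addn0 1?mulnC // => t.
  by rewrite -val_eqE /= eq_sym => /negbTE ->.
have hits1 : forall t, t < N -> hits t = 1.
  by apply: (eq_digits (fun t _ => hits_lt t)) hits_digits => m lt_mN; lia.
have lab_onto t : t < N -> t \in [seq lab p | p in [set p | x p != 0]].
  move/hits1; apply: contra_eqT => not_lab; rewrite /hits big1 // => p _.
  case: eqP => [lab_p|]; last by rewrite mul0n.
  case: (eqVneq (x p) 0) => [->|xp_neq0]; first by rewrite muln0.
  by case/negP: not_lab; rewrite -lab_p; apply: image_f; rewrite inE.
rewrite -(size_iota 0 N) -(size_image lab) uniq_leq_size ?iota_uniq // => t.
by rewrite mem_iota add0n => /lab_onto.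
Qed.

Definition seq_coef (L : seq (nat * nat)) n := \sum_(c <- L) (c.1 == n) * c.2.

Lemma seq_coef_ge L n v : (n, v) \in L -> v <= seq_coef L n.
Proof. by move=> nv_in; rewrite /seq_coef (big_rem _ nv_in) /= eqxx mul1n leq_addr. Qed.

Lemma seq_coef_le L n r : uniq (map fst L) ->
  all (fun c => c.2 <= r) L -> seq_coef L n <= r.
Proof.
rewrite /seq_coef; elim: L => [|c L IH] /=; first by rewrite big_nil.
case/andP=> c_notin L_uniq /andP[c_le L_le]; rewrite big_cons.
case: eqP => [c_n|_]; last by rewrite add0n IH.
rewrite mul1n big1_seq ?addn0 // => c' /andP[_ c'_in].
by case: eqP => // c'_n; case/negP: c_notin; rewrite c_n -c'_n map_f.
Qed.

Lemma sum_eqb_mul (T : finType) (c : T) (F : T -> nat) : \sum_p (p == c) * F p = F c.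
Proof. by rewrite (bigD1 c) //= eqxx mul1n big1 ?addn0 // => p /negbTE ->. Qed.

Section Construction.
Variables (K d : nat).
Hypothesis d_eq : d = 6 * K + 4.

Definition nconf := 2 ^ K.
Definition base := nconf.+1.
Definition reg_max := base ^ nconf.
Definition shift j := base ^ 2 ^ j.
Definition item j r := 6 * j + r.

(* Layer j has six item types: q_j0 and q_j1 (counts of [item j 0], [item j 1])
   encode bit j = 1 resp. 0, the register u_j := q_j2 + q_j3 is split by the
   bit, and q_j4, q_j5 pad the active half up to reg_max.  Equation (j, e) is
   given by its (item, coefficient) pairs: (j, 0) is the bit, (j, 2) and (j, 3)
   empty one half of the register and pad the other one, and (j + 1, 1) then
   forces u_(j+1) = u_j if bit j is 0 and u_(j+1) = shift j * u_j if it is 1;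
   (0, 1) starts with u_0 = 1. *)
Definition layer_eqn j e : seq (nat * nat) :=
  match e, j with
  | 0, _ => [:: (item j 0, 1); (item j 1, 1)]
  | 1, 0 => [:: (item 0 2, 1); (item 0 3, 1)]
  | 1, j'.+1 => [:: (item j 2, 1); (item j 3, 1); (item j' 5, 1); (item j' 0, reg_max);
                   (item j' 4, shift j'); (item j' 1, shift j' * reg_max)]
  | 2, _ => [:: (item j 2, 1); (item j 4, 1); (item j 1, reg_max)]
  | _, _ => [:: (item j 3, 1); (item j 5, 1); (item j 0, reg_max)]
  end.

Definition layer_rhs j e : nat :=
  match e, j with
  | 0, _ | 1, 0 => 1
  | 1, j'.+1 => reg_max + shift j' * reg_max
  | _, _ => reg_max
  end.

Definition neqn := 4 * K + 2.
Definition eqn m := layer_eqn (m %/ 4) (m %% 4).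
Definition eqn_rhs m := layer_rhs (m %/ 4) (m %% 4).
Definition coef n m := seq_coef (eqn m) n.

(* Digit m of a size is its coefficient in equation m; dbase exceeds every
   digit of the total demand, so adding up the items of a bin never carries. *)
Definition dbase := (nconf * (reg_max + reg_max * reg_max)).+1.
Definition item_size (i : 'I_d) := \sum_(m < neqn) coef i m * dbase ^ m.
Definition capacity := \sum_(m < neqn) eqn_rhs m * dbase ^ m.

Definition pcoord (p : 'I_d -> nat) n := \sum_(i < d | i == n :> nat) p i.
Definition eqn_lhs (p : 'I_d -> nat) m := \sum_(i < d) p i * coef i m.
Definition layer_lhs p j e := \sum_(c <- layer_eqn j e) c.2 * pcoord p c.1.
Definition solves p := forall m, m < neqn -> eqn_lhs p m = eqn_rhs m.

Lemma pcoordE p n (lt_nd : n < d) : pcoord p n = p (Ordinal lt_nd).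
Proof. exact: big_pred1. Qed.

Lemma eqn_lhsE p m : eqn_lhs p m = layer_lhs p (m %/ 4) (m %% 4).
Proof.
rewrite /eqn_lhs /coef /seq_coef /layer_lhs -/(eqn m).
under [LHS]eq_bigr => i _ do rewrite big_distrr.
rewrite exchange_big /=; apply: eq_bigr => c _.
rewrite /pcoord big_distrr [RHS]big_mkcond /=; apply: eq_bigr => i _.
by rewrite eq_sym; case: eqP; rewrite ?mul1n ?muln0 // mulnC.
Qed.

Lemma divmod4 j e : e < 4 -> (4 * j + e) %/ 4 = j /\ (4 * j + e) %% 4 = e.
Proof. by move=> lt_e4; rewrite mulnC divnMDl // divn_small // addn0 modnMDl modn_small. Qed.

Lemma solves_layerP p : solves p <->
  (forall j e, e < 4 -> 4 * j + e < neqn -> layer_lhs p j e = layer_rhs j e).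
Proof.
split=> [p_solves j e lt_e4 lt_m | p_layer m lt_m].
  by have := p_solves _ lt_m; rewrite eqn_lhsE /eqn_rhs; case: (divmod4 j lt_e4) => -> ->.
by rewrite eqn_lhsE /eqn_rhs p_layer ?ltn_mod // mulnC -divn_eq.
Qed.

Lemma eqn_layer j e : e < 4 -> eqn (4 * j + e) = layer_eqn j e.
Proof. by move=> lt_e4; rewrite /eqn; case: (divmod4 j lt_e4) => -> ->. Qed.

Lemma reg_max_gt0 : 0 < reg_max. Proof. by rewrite expn_gt0. Qed.

Lemma shift_le j : j < K -> shift j <= reg_max.
Proof. by move=> lt_jK; rewrite leq_pexp2l // leq_exp2l // ltnW. Qed.

Lemma coef_le_eqn_rhs n m : coef n m <= eqn_rhs m.
Proof.
rewrite /coef /eqn_rhs /eqn; move: (m %/ 4) (m %% 4) => j e.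
have M_gt0 := reg_max_gt0; have c_gt0 j' : 0 < shift j' by rewrite expn_gt0.
apply: seq_coef_le;
  case: e => [|[|[|e]]]; try case: j => [|j]; rewrite /= ?inE /item;
  try have := c_gt0 j; nia.
Qed.

Lemma eqn_rhs_le m : m < neqn -> eqn_rhs m <= reg_max + reg_max * reg_max.
Proof.
rewrite /eqn_rhs /neqn {1}(divn_eq m 4); have := ltn_mod m 4.
move: (m %/ 4) (m %% 4) => j e lt_e4 lt_m.
case: e lt_e4 lt_m => [|[|e]] lt_e4 lt_m /=; have M_gt0 := reg_max_gt0; try lia.
case: j lt_m => [|j] lt_m; first lia.
by rewrite leq_add2l leq_mul2r shift_le ?orbT //; lia.
Qed.

Lemma item_in_eqn n : n < d -> exists2 m, m < neqn & (n, 1) \in eqn m.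
Proof.
have -> : n = item (n %/ 6) (n %% 6) by rewrite /item mulnC -divn_eq.
have := ltn_mod n 6; move: (n %/ 6) (n %% 6) => j r lt_r6.
rewrite d_eq /item /neqn => lt_nd.
case: r lt_r6 lt_nd => [|[|[|[|[|[|//]]]]]] _ lt_nd.
- by exists (4 * j + 0); [lia | rewrite eqn_layer // inE eqxx].
- by exists (4 * j + 0); [lia | rewrite eqn_layer // !inE eqxx orbT].
- exists (4 * j + 1); first lia.
  by rewrite eqn_layer //; case: j {lt_nd} => [|j]; rewrite inE eqxx.
- exists (4 * j + 1); first lia.
  by rewrite eqn_layer //; case: j {lt_nd} => [|j]; rewrite !inE eqxx ?orbT.
- by exists (4 * j + 2); [lia | rewrite eqn_layer // !inE eqxx ?orbT].
- by exists (4 * j + 3); [lia | rewrite eqn_layer // !inE eqxx ?orbT].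
Qed.

Lemma item_size_gt0 i : 0 < item_size i.
Proof.
have [m lt_m i_in] := item_in_eqn (ltn_ord i).
rewrite /item_size (bigD1 (Ordinal lt_m)) //= ltn_addr // muln_gt0 expn_gt0 /= andbT.
exact: leq_trans (seq_coef_ge i_in).
Qed.

Lemma item_size_le i : item_size i <= capacity.
Proof. by apply: leq_sum => m _; rewrite leq_mul2r coef_le_eqn_rhs orbT. Qed.

Definition encoded p j := \sum_(l < j) 2 ^ l * pcoord p (item l 0).

Section SolutionStructure.
Variable p : 'I_d -> nat.
Hypothesis p_solves : solves p.
Let q j r := pcoord p (item j r).

Lemma solves_layer j e : e < 4 -> 4 * j + e < neqn -> layer_lhs p j e = layer_rhs j e.
Proof. by move: j e; apply/solves_layerP. Qed.

Lemma bit_eqn j : j <= K -> q j 0 + q j 1 = 1.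
Proof.
move=> le_jK; have := @solves_layer j 0 isT.
by rewrite /layer_lhs !big_cons big_nil /= !mul1n !addn0; apply; rewrite /neqn; lia.
Qed.

Lemma start_eqn : q 0 2 + q 0 3 = 1.
Proof.
have := @solves_layer 0 1 isT.
by rewrite /layer_lhs !big_cons big_nil /= !mul1n !addn0; apply; rewrite /neqn; lia.
Qed.

Lemma set_eqn j : j < K -> q j 2 + q j 4 + reg_max * q j 1 = reg_max.
Proof.
move=> lt_jK; have := @solves_layer j 2 isT.
by rewrite /layer_lhs !big_cons big_nil /= !mul1n !addn0 addnA; apply; rewrite /neqn; lia.
Qed.

Lemma unset_eqn j : j < K -> q j 3 + q j 5 + reg_max * q j 0 = reg_max.
Proof.
move=> lt_jK; have := @solves_layer j 3 isT.
by rewrite /layer_lhs !big_cons big_nil /= !mul1n !addn0 addnA; apply; rewrite /neqn; lia.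
Qed.

Lemma carry_eqn j : j < K ->
  q j.+1 2 + q j.+1 3 + q j 5 + reg_max * q j 0 + shift j * q j 4 + shift j * reg_max * q j 1
  = reg_max + shift j * reg_max.
Proof.
move=> lt_jK; have := @solves_layer j.+1 1 isT.
by rewrite /layer_lhs !big_cons big_nil /= !mul1n !addn0 !addnA; apply; rewrite /neqn; lia.
Qed.

Lemma register_step j : j < K ->
  q j.+1 2 + q j.+1 3 = shift j ^ q j 0 * (q j 2 + q j 3) /\ q j 0 <= 1.
Proof.
move=> lt_jK; have e_bit := bit_eqn (ltnW lt_jK); have e_set := set_eqn lt_jK.
have e_unset := unset_eqn lt_jK; have e_carry := carry_eqn lt_jK.
have [q0|q0] : q j 0 = 0 \/ q j 0 = 1 by lia.
- have q1 : q j 1 = 1 by lia.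
  rewrite q0 expn0 mul1n; rewrite q0 q1 !muln0 !muln1 in e_carry e_set e_unset.
  split => //; lia.
- have q1 : q j 1 = 0 by lia.
  rewrite q0 expn1; rewrite q0 q1 !muln0 !muln1 in e_carry e_set e_unset.
  have shift_split : shift j * reg_max = shift j * q j 2 + shift j * q j 4.
    by rewrite -mulnDr; congr (_ * _); lia.
  split => //; rewrite mulnDr; lia.
Qed.

Lemma register_encoded j : j <= K ->
  q j 2 + q j 3 = base ^ encoded p j /\ encoded p j < 2 ^ j.
Proof.
elim: j => [|j IH] le_jK; first by rewrite /encoded big_ord0 start_eqn.
have [register_j enc_lt] := IH (ltnW le_jK); have [step q0_le] := register_step le_jK.
rewrite /encoded big_ord_recr /= -/(encoded p j) step register_j.
rewrite /shift -expnM -expnD expnS; split; first by congr (_ ^ _); ring.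
have : 2 ^ j * pcoord p (item j 0) <= 2 ^ j.
  by rewrite -{2}(muln1 (2 ^ j)) leq_mul2l q0_le orbT.
lia.
Qed.

End SolutionStructure.

Definition bit t j : nat := odd (t %/ 2 ^ j).
Definition register t j := base ^ (t %% 2 ^ j).

Definition layer_cfg t j r :=
  let b := bit t j in
  match r with
  | 0 => b
  | 1 => 1 - b
  | 2 => b * register t j
  | 3 => (1 - b) * register t j
  | 4 => b * (reg_max - register t j)
  | _ => (1 - b) * (reg_max - register t j)
  end.

Definition cfg t n := layer_cfg t (n %/ 6) (n %% 6).

Lemma cfg_item t j r : r < 6 -> cfg t (item j r) = layer_cfg t j r.
Proof.
by move=> lt_r6; rewrite /cfg /item mulnC divnMDl // divn_small // addn0 modnMDl modn_small.
Qed.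

Lemma register_le t j : t < nconf -> register t j <= reg_max.
Proof. by move=> lt_tN; rewrite leq_pexp2l // ltnW // (leq_ltn_trans (leq_mod _ _)). Qed.

Lemma mod_pow2S t j : t %% 2 ^ j.+1 = t %% 2 ^ j + bit t j * 2 ^ j.
Proof.
rewrite /bit; have lt_r : t %% 2 ^ j < 2 ^ j by rewrite ltn_mod expn_gt0.
move: (divn_eq t (2 ^ j)) lt_r; move: (t %/ 2 ^ j) (t %% 2 ^ j) => q r -> lt_r.
have -> : q * 2 ^ j + r = q %/ 2 * 2 ^ j.+1 + (r + odd q * 2 ^ j).
  by rewrite {1}(divn_eq q 2) modn2 expnS; ring.
by rewrite modnMDl modn_small // expnS; case: odd; lia.
Qed.

Lemma register_succ t j : register t j.+1 = shift j ^ bit t j * register t j.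
Proof. by rewrite /register mod_pow2S /shift -expnM -expnD mulnC addnC. Qed.

Lemma layer_eqn_lt j e : e < 4 -> 4 * j + e < neqn ->
  all (fun c => c.1 < d) (layer_eqn j e).
Proof.
rewrite d_eq /neqn; case: e => [|[|[|[|//]]]] _ lt_m; try case: j lt_m => [|j] lt_m;
  rewrite /= /item; lia.
Qed.

Lemma layer_lhs_cfg t j e : e < 4 -> 4 * j + e < neqn ->
  layer_lhs (fun i => cfg t i) j e = \sum_(c <- layer_eqn j e) c.2 * cfg t c.1.
Proof.
move=> lt_e4 /(layer_eqn_lt lt_e4)/allP c_lt.
by apply: eq_big_seq => c /c_lt lt_cd; rewrite pcoordE.
Qed.

Lemma cfg_solves t : t < nconf -> solves (fun i => cfg t i).
Proof.
move=> lt_tN; apply/solves_layerP => j e lt_e4 lt_m.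
rewrite layer_lhs_cfg //; case: e lt_e4 {lt_m} => [|[|[|[|//]]]] _.
- by rewrite !big_cons big_nil /= !cfg_item //= /bit; case: odd.
- case: j => [|j]; rewrite !big_cons big_nil /= !cfg_item //=.
    by rewrite /register expn0 modn1 /bit; case: odd.
  have := register_le j lt_tN.
  have : shift j * register t j <= shift j * reg_max.
    by rewrite leq_mul2l register_le ?orbT.
  rewrite register_succ /bit; case: odd; case: odd => /=;
    rewrite ?expn0 ?expn1 ?mul1n ?mul0n ?muln1 ?muln0 ?subnn ?subn0 ?mulnBr; lia.
- have := register_le j lt_tN.
  by rewrite !big_cons big_nil /= !cfg_item //= /bit; case: odd => /=; lia.
- have := register_le j lt_tN.
  by rewrite !big_cons big_nil /= !cfg_item //= /bit; case: odd => /=; lia.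
Qed.

Lemma load_digits (p : 'I_d -> nat) :
  \sum_(i < d) item_size i * p i = \sum_(m < neqn) eqn_lhs p m * dbase ^ m.
Proof.
under [LHS]eq_bigr => i _ do rewrite /item_size big_distrl.
rewrite exchange_big /=; apply: eq_bigr => m _.
by rewrite /eqn_lhs big_distrl; apply: eq_bigr => i _ /=; ring.
Qed.

Lemma solves_load p : solves p -> \sum_(i < d) item_size i * p i = capacity.
Proof. by move=> p_solves; rewrite load_digits; apply: eq_bigr => m _; rewrite p_solves. Qed.

Lemma cfg_le_capacity t (i : 'I_d) : t < nconf -> cfg t i <= capacity.
Proof.
move=> lt_tN; rewrite -(solves_load (cfg_solves lt_tN)) (bigD1 i) //=.
exact: leq_trans (leq_pmull _ (item_size_gt0 i)) (leq_addr _ _).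
Qed.

Definition demand (i : 'I_d) := \sum_(t < nconf) cfg t i.

Lemma eqn_lhs_demand m : m < neqn -> eqn_lhs demand m = nconf * eqn_rhs m.
Proof.
move=> lt_m; rewrite /eqn_lhs.
under [LHS]eq_bigr => i _ do rewrite /demand big_distrl.
rewrite exchange_big /= -[in RHS](card_ord nconf) -sum_nat_const.
by apply: eq_bigr => t _; exact: cfg_solves (ltn_ord t) m lt_m.
Qed.

Lemma full_bin_solves (p : 'I_d -> nat) : (forall i, p i <= demand i) ->
  \sum_(i < d) item_size i * p i = capacity -> solves p.
Proof.
move=> p_le p_full.
have lt_dbase m : m < neqn -> nconf * eqn_rhs m < dbase.
  by move=> lt_m; rewrite ltnS leq_mul2l eqn_rhs_le ?orbT.
have digits : \sum_(m < neqn) eqn_lhs p m * dbase ^ m = \sum_(m < neqn) eqn_rhs m * dbase ^ m.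
  by rewrite -load_digits.
apply: eq_digits digits => m lt_m; apply: leq_ltn_trans (lt_dbase m lt_m).
  by rewrite -eqn_lhs_demand //; apply: leq_sum => i _; rewrite leq_mul2r p_le orbT.
by rewrite leq_pmull // /nconf expn_gt0.
Qed.

Definition conf t : cand d capacity := [ffun i : 'I_d => inord (cfg t i)].

Definition intended : {ffun cand d capacity -> nat} :=
  [ffun p => \sum_(t < nconf) (p == conf t)].

Lemma conf_cfg t (i : 'I_d) : t < nconf -> conf t i = cfg t i :> nat.
Proof. by move=> lt_tN; rewrite ffunE inordK // ltnS cfg_le_capacity. Qed.

Lemma load_conf t : t < nconf -> load item_size (conf t) = capacity.
Proof.
move=> lt_tN; rewrite -[RHS](solves_load (cfg_solves lt_tN)).
by apply: eq_bigr => i _; rewrite conf_cfg.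
Qed.

Lemma intended_full p : intended p != 0 -> load item_size p = capacity.
Proof.
rewrite ffunE; apply: contraNeq => not_full; apply/eqP; apply: big1 => t _.
by apply/eqP; rewrite eqb0; apply: contra not_full => /eqP ->; rewrite load_conf.
Qed.

Lemma intended_feasible : config_ilp_feasible item_size demand capacity intended.
Proof.
split=> [p /intended_full full_p | i]; first by rewrite /is_config -/(load _ _) full_p.
under eq_bigr => p _ do rewrite ffunE big_distrl.
rewrite exchange_big /=; apply: eq_bigr => t _.
by rewrite (sum_eqb_mul (conf t) (fun p => p i)) conf_cfg.
Qed.

Lemma nbins_intended : nbins intended = nconf.
Proof.
rewrite /nbins; under eq_bigr => p _ do rewrite ffunE.
rewrite exchange_big /= -[RHS]card_ord -sum1_card; apply: eq_bigr => t _.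
by rewrite -[RHS](sum_eqb_mul (conf t) (fun=> 1)); apply: eq_bigr => p _; rewrite muln1.
Qed.

Lemma cfg_register t j : cfg t (item j 2) + cfg t (item j 3) = register t j.
Proof. by rewrite !cfg_item //= /bit; case: odd; rewrite /= ?mul1n ?mul0n ?addn0. Qed.

Theorem optimal_supp_card x :
  config_ilp_optimal item_size demand capacity x -> nconf <= #|supp x|.
Proof.
move=> x_opt; have [[_ x_dem] x_min] := x_opt.
have x_full := optimal_full_bins x_opt intended_feasible intended_full.
have x_solves p : x p != 0 -> solves (fun i => p i).
  move=> xp_neq0; apply: full_bin_solves (x_full p xp_neq0) => i.
  exact: feasible_le_demand x_opt.1 xp_neq0.
have lt_K2 : item K 2 < d by rewrite d_eq /item; lia.
have lt_K3 : item K 3 < d by rewrite d_eq /item; lia.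
rewrite /supp; apply: (@card_supp_labels _ x (fun p => encoded (fun i => p i) K) base) => //.
- by rewrite -nbins_intended; apply: x_min intended_feasible.
- by move=> p /x_solves/register_encoded/(_ K (leqnn K))[].
transitivity (\sum_p x p * (p (Ordinal lt_K2) + p (Ordinal lt_K3))).
  apply: eq_bigr => p _; case: (eqVneq (x p) 0) => [-> //|].
  by move=> /x_solves/register_encoded/(_ K (leqnn K))[<- _]; rewrite !pcoordE.
under [LHS]eq_bigr do rewrite mulnDr.
rewrite big_split /= !x_dem -big_split /=; apply: eq_bigr => t _.
by rewrite cfg_register /register modn_small.
Qed.

End Construction.

Theorem theorem1 :
  forall d' : nat, 1 <= d' ->
  exists (s a : 'I_(12 * d' + 4) -> nat) (C : nat),
    (forall i, 0 < s i <= C) /\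
    (forall x : {ffun cand (12 * d' + 4) C -> nat},
        config_ilp_optimal s a C x -> 2 ^ d' - 1 <= #|supp x|).
Proof.
move=> d' d'_gt0; have d_eq : 12 * d' + 4 = 6 * (2 * d') + 4 by rewrite mulnA.
exists (@item_size (2 * d') _), (@demand (2 * d') _), (capacity (2 * d')); split.
  by move=> i; rewrite (item_size_gt0 d_eq) item_size_le.
move=> x /(optimal_supp_card d_eq); apply: leq_trans.
by rewrite leq_subLR (leq_trans _ (leq_addl _ _)) // leq_exp2l // leq_pmull.
Qed.
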